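(* Let $f\not\equiv0$ be given by a Taylor series $f(z)=\sum_{k\ge0}a_kz^k$ with radius of convergence $R\in(0,\infty]$, and let $a_{n_0}$ be its first non-zero coefficient. Then for every $n>n_0$, $\kappa(n,r)\to\infty$ as $r\to0$; but $\kappa(n_0,r)\to1$ as $r\to 0$.
   Context: For $0<r<R$, $M_1(r)=\frac{1}{2\pi}\int_0^{2\pi}|f(re^{i\theta})|\,d\theta$ and $\kappa(n,r)=\dfrac{M_1(r)}{|a_n|r^n}$, with the convention $\kappa(n,r)=+\infty$ if $a_n=0$. *)

From Stdlib Require Import Reals.
From Coquelicot Require Import Coquelicot.
Open Scope R_scope.

Fixpoint Cpow (z : C) (k : nat) : C :=
  match k with O => RtoC 1 | S k' => Cmult z (Cpow z k') end.

(* radius of convergence of sum a_k z^k (depends only on |a_k|) *)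
Definition radius (a : nat -> C) : Rbar := CV_radius (fun k => Cmod (a k)).

Definition fps (a : nat -> C) (z : C) : C :=
  (Series (fun k => Re (Cmult (a k) (Cpow z k))),
   Series (fun k => Im (Cmult (a k) (Cpow z k)))).

Definition cis (t : R) : C := (cos t, sin t).

Definition M1 (a : nat -> C) (r : R) : R :=
  / (2 * PI) * RInt (fun t => Cmod (fps a (Cmult (RtoC r) (cis t)))) 0 (2 * PI).

Definition kappa (a : nat -> C) (n : nat) (r : R) : Rbar :=
  match Req_EM_T (Cmod (a n)) 0 with
  | left _ => p_infty
  | right _ => Finite (M1 a r / (Cmod (a n) * r ^ n))
  end.

Definition tends_pinfty_at_0 (g : R -> Rbar) : Prop :=
  forall M : R, exists d : R, 0 < d /\
    forall r, 0 < r < d -> Rbar_lt (Finite M) (g r).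

Definition tends_to_at_0 (g : R -> Rbar) (l : R) : Prop :=
  forall eps : R, 0 < eps -> exists d : R, 0 < d /\
    forall r, 0 < r < d ->
      Rbar_lt (Finite (l - eps)) (g r) /\ Rbar_lt (g r) (Finite (l + eps)).

From Pilot Require Import Defs.
From Stdlib Require Import Reals Lra Psatz.
From Coquelicot Require Import Coquelicot.
Open Scope R_scope.

(* For |z| <= rho inside the disc of convergence, f(z) = a_n0 z^n0 + O(|z|^(n0+1))
   uniformly, so averaging |f| over the circle |z| = r gives
   M_1(r) = |a_n0| r^n0 + O(r^(n0+1)) = |a_n0| r^n0 (1 + o(1)).  Dividing by
   |a_n| r^n yields the limit 1 for n = n0, and something of order r^(n0-n) for
   n > n0. *)

Lemma im_le_Cmod (c : C) : Rabs (Im c) <= Cmod c.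
Proof. eapply Rle_trans; [apply Rmax_r | apply Rmax_Cmod]. Qed.

Lemma Cmod_le_Re_Im (c : C) : Cmod c <= Rabs (Re c) + Rabs (Im c).
Proof.
  destruct c as [x y]; unfold Cmod, Re, Im; simpl.
  pose proof (Rabs_pos x); pose proof (Rabs_pos y).
  rewrite <- (sqrt_Rsqr (Rabs x + Rabs y)) by lra.
  apply sqrt_le_1_alt; unfold Rsqr.
  rewrite <- (Rabs_right (x * (x * 1))), <- (Rabs_right (y * (y * 1))) by nra.
  rewrite !Rmult_1_r, !Rabs_mult; nra.
Qed.

Lemma Cmod_cis (t : R) : Cmod (cis t) = 1.
Proof.
  unfold Cmod, cis; simpl.
  rewrite !Rmult_1_r, <- sqrt_1; f_equal.
  pose proof (sin2_cos2 t) as H; unfold Rsqr in H; lra.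
Qed.

Lemma Cmod_polar (r t : R) : 0 <= r -> Cmod (Cmult (RtoC r) (cis t)) = r.
Proof. intros Hr. rewrite Cmod_mult, Cmod_R, Cmod_cis, Rabs_pos_eq; lra. Qed.

Lemma Rbar_lt_0_ex_pos (x : Rbar) : Rbar_lt 0 x -> exists r, 0 < r /\ Rbar_lt r x.
Proof.
  destruct x as [x| |]; simpl; intros Hx; try contradiction.
  - exists (x / 2); split; lra.
  - exists 1; split; [lra | exact I].
Qed.

Lemma ex_series_Cmod_inside (a : nat -> C) (r : R) :
  0 <= r -> Rbar_lt r (radius a) -> ex_series (fun k => Cmod (a k) * r ^ k).
Proof.
  intros Hr Hlt.
  assert (Hps : ex_pseries (fun k => Cmod (a k)) r).
  { apply CV_radius_inside; rewrite Rabs_pos_eq by exact Hr; exact Hlt. }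
  eapply ex_series_ext; [|exact Hps].
  intros k; simpl; rewrite pow_n_pow; unfold scal; simpl; unfold mult; simpl; ring.
Qed.

Lemma continuity_Series (fn : nat -> R -> R) (An : nat -> R) :
  (forall k, continuity (fn k)) -> (forall k t, Rabs (fn k t) <= An k) ->
  ex_series An -> continuity (fun t => Series (fun k => fn k t)).
Proof.
  intros Hc Hb HA.
  assert (HAabs : forall k, Rabs (An k) = An k)
    by (intros k; apply Rabs_pos_eq, (Rle_trans _ _ _ (Rabs_pos (fn k 0)) (Hb k 0))).
  assert (HN : CVN_R fn).
  { intros rr; exists An, (Series An); split.
    - apply (Un_cv_ext (fun n => sum_f_R0 An n)).
      + intros n; apply sum_eq; intros k _; symmetry; apply HAabs.
      + apply is_series_Reals, Series_correct, HA.
    - intros n y _; apply Hb. }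
  intros t.
  apply continuity_pt_ext with (f := SFL fn (CVN_R_CVS fn HN));
    [|apply (SFL_continuity fn _ HN Hc)].
  intros y; unfold SFL; destruct (CVN_R_CVS fn HN y) as [l Hl].
  symmetry; apply is_series_unique, is_series_Reals, Hl.
Qed.

Definition Ccontinuity (g : R -> C) : Prop :=
  continuity (fun t => Re (g t)) /\ continuity (fun t => Im (g t)).

Lemma Ccontinuity_const (c : C) : Ccontinuity (fun _ => c).
Proof. split; apply continuity_const; intros ??; reflexivity. Qed.

Lemma Ccontinuity_mult (g h : R -> C) :
  Ccontinuity g -> Ccontinuity h -> Ccontinuity (fun t => Cmult (g t) (h t)).
Proof.
  intros [g1 g2] [h1 h2]; split; simpl.
  - apply continuity_minus; apply continuity_mult; assumption.
  - apply continuity_plus; apply continuity_mult; assumption.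
Qed.

Lemma Ccontinuity_pow (g : R -> C) (k : nat) :
  Ccontinuity g -> Ccontinuity (fun t => Defs.Cpow (g t) k).
Proof.
  intros Hg; induction k as [|k IHk]; simpl.
  - apply Ccontinuity_const.
  - apply Ccontinuity_mult; assumption.
Qed.

Lemma Ccontinuity_polar (r : R) : Ccontinuity (fun t => Cmult (RtoC r) (cis t)).
Proof.
  apply Ccontinuity_mult; [apply Ccontinuity_const|].
  split; [apply continuity_cos | apply continuity_sin].
Qed.

Lemma continuity_Cmod (g : R -> C) : Ccontinuity g -> continuity (fun t => Cmod (g t)).
Proof.
  intros [g1 g2] t.
  set (s := fun t => Re (g t) * Re (g t) + Im (g t) * Im (g t)).
  apply continuity_pt_ext with (f := comp sqrt s).
  { intros y; unfold comp, s, Cmod, Re, Im; f_equal; ring. }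
  apply continuity_pt_comp.
  - apply continuity_plus; apply continuity_mult; assumption.
  - apply continuity_pt_sqrt; unfold s; nra.
Qed.

Lemma Ccontinuity_fps_polar (a : nat -> C) (r : R) :
  0 <= r -> ex_series (fun k => Cmod (a k) * r ^ k) ->
  Ccontinuity (fun t => fps a (Cmult (RtoC r) (cis t))).
Proof.
  intros Hr Hs.
  pose (term k t := Cmult (a k) (Defs.Cpow (Cmult (RtoC r) (cis t)) k)).
  assert (Hterm : forall k, Ccontinuity (term k)).
  { intros k; apply Ccontinuity_mult;
      [apply Ccontinuity_const | apply Ccontinuity_pow, Ccontinuity_polar]. }
  assert (Hmod : forall k t, Cmod (term k t) = Cmod (a k) * r ^ k).
  { intros k t; unfold term; rewrite Cmod_mult, Cmod_pow, Cmod_polar by exact Hr; reflexivity. }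
  split; apply (continuity_Series _ (fun k => Cmod (a k) * r ^ k)); try exact Hs;
    intros k; try apply (Hterm k); intros t; rewrite <- (Hmod k t).
  - apply re_le_Cmod.
  - apply im_le_Cmod.
Qed.

Lemma RInt_mean_close (h : R -> R) (lo hi c e : R) :
  lo < hi -> ex_RInt h lo hi -> (forall t, lo <= t <= hi -> Rabs (h t - c) <= e) ->
  Rabs (/ (hi - lo) * RInt h lo hi - c) <= e.
Proof.
  intros Hlt Hh Hb.
  assert (Hint : RInt (fun t => h t - c) lo hi = RInt h lo hi - (hi - lo) * c).
  { rewrite (RInt_minus h (fun _ => c)) by (auto; apply ex_RInt_const).
    rewrite RInt_const; reflexivity. }
  assert (Hdev : Rabs (RInt (fun t => h t - c) lo hi) <= (hi - lo) * e).
  { apply abs_RInt_le_const; [lra | | exact Hb].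
    apply (ex_RInt_minus h (fun _ => c)); [exact Hh | apply ex_RInt_const]. }
  rewrite Hint in Hdev.
  replace (/ (hi - lo) * RInt h lo hi - c) with (/ (hi - lo) * (RInt h lo hi - (hi - lo) * c))
    by (field; lra).
  rewrite Rabs_mult, Rabs_pos_eq by (apply Rlt_le, Rinv_0_lt_compat; lra).
  apply Rmult_le_reg_l with (hi - lo); [lra|].
  rewrite <- Rmult_assoc, Rinv_r, Rmult_1_l by lra; exact Hdev.
Qed.

Lemma Series_minus_leading_le (f c : nat -> R) (n0 : nat) (r rho : R) :
  0 < rho -> 0 <= r <= rho -> (forall k, 0 <= c k) ->
  ex_series (fun k => c k * rho ^ k) ->
  (forall k, (k < n0)%nat -> f k = 0) ->
  (forall k, Rabs (f k) <= c k * r ^ k) ->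
  Rabs (Series f - f n0) <= r ^ S n0 * Series (fun k => c (S n0 + k)%nat * rho ^ k).
Proof.
  intros Hrho Hr Hc Hcs Hz Hf.
  set (v := fun k => c (S n0 + k)%nat * rho ^ k).
  assert (Hrk : forall k, r ^ k <= rho ^ k) by (intros k; apply pow_incr; lra).
  assert (Hfs : ex_series f).
  { apply (ex_series_le f (fun k => c k * rho ^ k)); [|exact Hcs].
    intros k; eapply Rle_trans; [apply Hf | apply Rmult_le_compat_l; auto]. }
  assert (Hv : ex_series v).
  { apply (ex_series_ext (fun k => scal (/ rho ^ S n0) (c (S n0 + k)%nat * rho ^ (S n0 + k))));
      [|apply (ex_series_scal_l _ (fun k => c (S n0 + k)%nat * rho ^ (S n0 + k)));
        exact (proj1 (ex_series_incr_n (fun k => c k * rho ^ k) (S n0)) Hcs)].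
    intros k; unfold v, scal; simpl; unfold mult; simpl.
    rewrite pow_add; field; split; [apply pow_nonzero|]; lra. }
  assert (Htail : forall k, Rabs (f (S n0 + k)%nat) <= r ^ S n0 * v k).
  { intros k; eapply Rle_trans; [apply Hf|]; unfold v; rewrite pow_add.
    replace (c (S n0 + k)%nat * (r ^ S n0 * r ^ k))
      with (r ^ S n0 * c (S n0 + k)%nat * r ^ k) by ring.
    rewrite Rmult_assoc; apply Rmult_le_compat_l; [apply pow_le; lra|].
    apply Rmult_le_compat_l; [apply Hc | apply Hrk]. }
  assert (Hv' : ex_series (fun k => r ^ S n0 * v k)) by exact (ex_series_scal_l _ v Hv).
  assert (Hshift : Series f - f n0 = Series (fun k => f (S n0 + k)%nat)).
  { rewrite (Series_incr_n f (S n0)) by (auto with arith); simpl pred.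
    destruct n0 as [|m]; simpl; [ring|].
    rewrite sum_eq_R0 by (intros k Hk; apply Hz; lia); ring. }
  rewrite Hshift, <- Series_scal_l.
  eapply Rle_trans.
  - apply Series_Rabs.
    apply (@ex_series_le R_AbsRing R_CompleteNormedModule _ (fun k => r ^ S n0 * v k));
      [|exact Hv'].
    intros k; change norm with Rabs; rewrite Rabs_Rabsolu; apply Htail.
  - apply Series_le; [|exact Hv']. intros k; split; [apply Rabs_pos | apply Htail].
Qed.

Section LeadingTerm.

Variables (a : nat -> C) (n0 : nat) (rho : R).
Hypothesis rho_gt0 : 0 < rho.
Hypothesis rho_inside : Rbar_lt rho (radius a).
Hypothesis a_lt_n0 : forall k, (k < n0)%nat -> a k = RtoC 0.

Let V := Series (fun k => Cmod (a (S n0 + k)%nat) * rho ^ k).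

Lemma Cmod_fps_near_leading (z : C) :
  Cmod z <= rho ->
  Rabs (Cmod (fps a z) - Cmod (a n0) * Cmod z ^ n0) <= 2 * V * Cmod z ^ S n0.
Proof.
  intros Hz.
  set (w := Cmult (a n0) (Defs.Cpow z n0)).
  assert (Hw : Cmod w = Cmod (a n0) * Cmod z ^ n0)
    by (unfold w; rewrite Cmod_mult, Cmod_pow; reflexivity).
  assert (Hr : 0 <= Cmod z <= rho) by (split; [apply Cmod_ge_0 | exact Hz]).
  assert (Hcs := ex_series_Cmod_inside a rho (Rlt_le _ _ rho_gt0) rho_inside).
  assert (Hterm : forall k, Cmod (Cmult (a k) (Defs.Cpow z k)) = Cmod (a k) * Cmod z ^ k)
    by (intros k; rewrite Cmod_mult, Cmod_pow; reflexivity).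
  assert (Hzero : forall k, (k < n0)%nat -> Cmult (a k) (Defs.Cpow z k) = RtoC 0)
    by (intros k Hk; rewrite a_lt_n0 by exact Hk; apply Cmult_0_l).
  assert (HRe := Series_minus_leading_le (fun k => Re (Cmult (a k) (Defs.Cpow z k)))
    (fun k => Cmod (a k)) n0 (Cmod z) rho rho_gt0 Hr (fun k => Cmod_ge_0 _) Hcs
    (fun k Hk => f_equal Re (Hzero k Hk))
    (fun k => Rle_trans _ _ _ (re_le_Cmod _) (Req_le _ _ (Hterm k)))).
  assert (HIm := Series_minus_leading_le (fun k => Im (Cmult (a k) (Defs.Cpow z k)))
    (fun k => Cmod (a k)) n0 (Cmod z) rho rho_gt0 Hr (fun k => Cmod_ge_0 _) Hcs
    (fun k Hk => f_equal Im (Hzero k Hk))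
    (fun k => Rle_trans _ _ _ (im_le_Cmod _) (Req_le _ _ (Hterm k)))).
  rewrite <- Hw.
  eapply Rle_trans; [apply (@norm_triangle_inv _ C_NormedModule (fps a z) w)|].
  eapply Rle_trans; [apply Cmod_le_Re_Im|].
  change (Rabs (Series (fun k => Re (Cmult (a k) (Defs.Cpow z k))) - Re w)
        + Rabs (Series (fun k => Im (Cmult (a k) (Defs.Cpow z k))) - Im w)
        <= 2 * V * Cmod z ^ S n0).
  cbv beta in HRe, HIm; fold w V in HRe, HIm; lra.
Qed.

Lemma M1_near_leading (r : R) :
  0 <= r <= rho -> Rabs (M1 a r - Cmod (a n0) * r ^ n0) <= 2 * V * r ^ S n0.
Proof.
  intros Hr.
  assert (H2PI : 0 < 2 * PI) by (pose proof PI_RGT_0; lra).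
  unfold M1; rewrite <- (Rminus_0_r (2 * PI)) at 1.
  apply RInt_mean_close; [lra | |].
  - apply (@ex_RInt_continuous R_CompleteNormedModule); intros t _.
    apply continuity_pt_filterlim, continuity_Cmod, Ccontinuity_fps_polar; [lra|].
    apply ex_series_Cmod_inside; [lra|].
    apply (Rbar_le_lt_trans _ rho); [simpl; lra | exact rho_inside].
  - intros t _; rewrite <- (Cmod_polar r t) at 2 3 by lra.
    apply Cmod_fps_near_leading; rewrite Cmod_polar; lra.
Qed.

End LeadingTerm.

Definition small_o_pow_at_0 (h : R -> R) (n : nat) : Prop :=
  forall eps, 0 < eps -> exists d, 0 < d /\ forall r, 0 < r < d -> Rabs (h r) <= eps * r ^ n.

Lemma small_o_pow_of_bigO_succ (h : R -> R) (n : nat) (rho K : R) :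
  0 < rho -> (forall r, 0 <= r <= rho -> Rabs (h r) <= K * r ^ S n) ->
  small_o_pow_at_0 h n.
Proof.
  intros Hrho Hh eps Heps.
  set (K' := Rabs K + 1).
  assert (HK' : 0 < K') by (unfold K'; pose proof (Rabs_pos K); lra).
  exists (Rmin rho (eps / K')); split; [apply Rmin_pos; [lra | apply Rdiv_lt_0_compat; lra]|].
  intros r [Hr0 Hrd].
  assert (Hrrho : r <= rho) by (pose proof (Rmin_l rho (eps / K')); lra).
  assert (HKr : K' * r <= eps).
  { pose proof (Rmin_r rho (eps / K')).
    apply Rmult_le_reg_r with (/ K'); [apply Rinv_0_lt_compat; lra|].
    replace (K' * r * / K') with r by (field; lra); unfold Rdiv in *; lra. }
  assert (HKr' : K * r <= eps) by (pose proof (Rle_abs K); unfold K' in HKr; nra).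
  eapply Rle_trans; [apply Hh; lra|]; simpl.
  rewrite <- Rmult_assoc; apply Rmult_le_compat_r; [apply pow_le|]; lra.
Qed.

Lemma pow_le_pow_mult (r : R) (m n : nat) :
  0 <= r <= 1 -> (m < n)%nat -> r ^ n <= r ^ m * r.
Proof.
  intros Hr Hmn.
  replace n with (m + 1 + (n - S m))%nat by lia.
  rewrite !pow_add, pow_1.
  assert (r ^ (n - S m) <= 1) by (rewrite <- (pow1 (n - S m)); apply pow_incr; lra).
  pose proof (pow_le r m (proj1 Hr)); pose proof (pow_le r (n - S m) (proj1 Hr)).
  rewrite <- (Rmult_1_r (r ^ m * r)) at 2.
  apply Rmult_le_compat_l; [apply Rmult_le_pos|]; lra.
Qed.

Section RatioLimits.

Variables (g : R -> R) (A : R) (n0 : nat).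
Hypothesis A_gt0 : 0 < A.
Hypothesis g_leading : small_o_pow_at_0 (fun r => g r - A * r ^ n0) n0.

Lemma ratio_leading_tends_to_1 : tends_to_at_0 (fun r => Finite (g r / (A * r ^ n0))) 1.
Proof.
  intros eps Heps.
  destruct (g_leading (eps * A / 2)) as [d [Hd Hg]]; [nra|].
  exists d; split; [exact Hd|]; intros r Hr.
  pose proof (pow_lt r n0 (proj1 Hr)) as Hs.
  assert (Hdev : Rabs (g r / (A * r ^ n0) - 1) <= eps / 2).
  { replace (g r / (A * r ^ n0) - 1) with ((g r - A * r ^ n0) / (A * r ^ n0)) by (field; lra).
    rewrite Rabs_div, (Rabs_pos_eq (A * r ^ n0)) by nra.
    apply Rmult_le_reg_r with (A * r ^ n0); [nra|].
    unfold Rdiv; rewrite Rmult_assoc, Rinv_l, Rmult_1_r by nra.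
    specialize (Hg r Hr); nra. }
  apply Rabs_le_between' in Hdev; simpl; lra.
Qed.

Lemma ratio_higher_tends_pinfty (B : R) (n : nat) :
  0 < B -> (n0 < n)%nat -> tends_pinfty_at_0 (fun r => Finite (g r / (B * r ^ n))).
Proof.
  intros HB Hn M.
  destruct (g_leading (A / 2)) as [d [Hd Hg]]; [lra|].
  set (M' := Rabs M + 1).
  assert (HM' : 0 < M') by (unfold M'; pose proof (Rabs_pos M); lra).
  exists (Rmin d (Rmin 1 (A / (2 * B * M')))); split.
  { repeat apply Rmin_pos; try lra; apply Rdiv_lt_0_compat; nra. }
  intros r [Hr0 Hrd].
  pose proof (Rmin_l d (Rmin 1 (A / (2 * B * M')))) as Hd1.
  pose proof (Rmin_r d (Rmin 1 (A / (2 * B * M')))) as Hd23.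
  pose proof (Rmin_l 1 (A / (2 * B * M'))) as Hd2.
  pose proof (Rmin_r 1 (A / (2 * B * M'))) as Hd3.
  assert (Hlower : A / 2 * r ^ n0 <= g r).
  { assert (Hrd' : 0 < r < d) by lra.
    specialize (Hg r Hrd'); apply Rabs_le_between' in Hg; lra. }
  assert (Hpow : r ^ n <= r ^ n0 * r) by (apply pow_le_pow_mult; lra || lia).
  assert (HBMr : B * M' * r <= A / 2).
  { apply Rmult_le_reg_r with (/ (B * M')); [apply Rinv_0_lt_compat; nra|].
    replace (B * M' * r * / (B * M')) with r by (field; lra).
    replace (A / 2 * / (B * M')) with (A / (2 * B * M')) by (field; lra); lra. }
  simpl; apply Rlt_div_r; [apply Rmult_lt_0_compat; [lra | apply pow_lt; lra]|].
  pose proof (pow_lt r n0 Hr0) as Hs0; pose proof (pow_lt r n Hr0) as Hs.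
  assert (H1 : M * (B * r ^ n) <= Rabs M * (B * (r ^ n0 * r))).
  { apply Rle_trans with (Rabs M * (B * r ^ n)).
    - apply Rmult_le_compat_r; [nra | apply Rle_abs].
    - apply Rmult_le_compat_l; [apply Rabs_pos|]; apply Rmult_le_compat_l; lra. }
  assert (H2 : Rabs M * (B * (r ^ n0 * r)) < B * M' * r * r ^ n0).
  { pose proof (Rmult_lt_0_compat _ _ HB (Rmult_lt_0_compat _ _ Hs0 Hr0)).
    unfold M'; lra. }
  assert (H3 : B * M' * r * r ^ n0 <= A / 2 * r ^ n0) by (apply Rmult_le_compat_r; lra).
  lra.
Qed.

End RatioLimits.

Theorem theorem4p3 (a : nat -> C) (n0 : nat) :
  Rbar_lt (Finite 0) (radius a) ->
  a n0 <> RtoC 0 ->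
  (forall k, (k < n0)%nat -> a k = RtoC 0) ->
  (forall n, (n0 < n)%nat -> tends_pinfty_at_0 (kappa a n)) /\
  tends_to_at_0 (kappa a n0) 1.
Proof.
  intros Hrad Hn0 Hz.
  destruct (Rbar_lt_0_ex_pos _ Hrad) as [rho [Hrho Hinside]].
  assert (HA : 0 < Cmod (a n0)) by (apply Cmod_gt_0, Hn0).
  assert (Ho : small_o_pow_at_0 (fun r => M1 a r - Cmod (a n0) * r ^ n0) n0)
    by exact (small_o_pow_of_bigO_succ _ n0 rho _ Hrho (M1_near_leading a n0 rho Hrho Hinside Hz)).
  split.
  - intros n Hn; unfold kappa.
    destruct (Req_EM_T (Cmod (a n)) 0) as [_ | Hann].
    + intros M; exists 1; split; [lra | intros; exact I].
    + apply (ratio_higher_tends_pinfty _ _ n0 HA Ho); [|exact Hn].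
      pose proof (Cmod_ge_0 (a n)); lra.
  - unfold kappa; destruct (Req_EM_T (Cmod (a n0)) 0) as [Hzero | _]; [lra|].
    exact (ratio_leading_tends_to_1 _ _ n0 HA Ho).
Qed.
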